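(* Let $n \ge 2$ and let $K, L$ be compact convex subsets of $\mathbb{R}^n$. Suppose that for every unit vector $u$, the projection $L_u$ contains a translate of $K_u$. Then there exists $x \in \mathbb{R}^n$ such that $$K + x \subseteq \tfrac{n}{n-1} L.$$
   Context: For a set $S \subseteq \mathbb{R}^n$ and a unit vector $u$, $S_u$ denotes the orthogonal projection of $S$ onto the hyperplane $u^\perp$. ''$A$ contains a translate of $B$'' means $B+w\subseteq A$ for some vector $w$. For $c>0$, $cL=\{cy : y\in L\}$. *)

From mathcomp Require Import all_boot.
From Stdlib Require Import Reals List.

Set Implicit Arguments.
Unset Strict Implicit.

Definition vec (n : nat) := 'I_n -> R.

Definition vadd n (x y : vec n) : vec n := fun i => (x i + y i)%R.
Definition vsub n (x y : vec n) : vec n := fun i => (x i - y i)%R.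
Definition vscale n (c : R) (x : vec n) : vec n := fun i => (c * x i)%R.

Definition dot n (x y : vec n) : R := \big[Rplus/0%R]_(i < n) (x i * y i)%R.
Definition vnorm n (x : vec n) : R := sqrt (dot x x).

Definition unit_vector n (u : vec n) : Prop := vnorm u = 1%R.

Definition veq n (x y : vec n) : Prop := forall i, x i = y i.

Definition is_open n (U : vec n -> Prop) : Prop :=
  forall x, U x -> exists eps : R, (0 < eps)%R /\
    forall y, (vnorm (vsub y x) < eps)%R -> U y.

Definition is_compact n (S : vec n -> Prop) : Prop :=
  forall (I : Type) (U : I -> vec n -> Prop),
    (forall i, is_open (U i)) ->
    (forall x, S x -> exists i, U i x) ->
    exists l : list I, forall x, S x -> exists i, In i l /\ U i x.

Definition is_convex n (S : vec n -> Prop) : Prop :=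
  forall x y (t : R), S x -> S y -> (0 <= t <= 1)%R ->
    S (vadd (vscale t x) (vscale (1 - t) y)).

(* orthogonal projection of x onto the hyperplane u^perp (u a unit vector) *)
Definition proj_perp n (u x : vec n) : vec n := vsub x (vscale (dot x u) u).

Definition proj_set n (S : vec n -> Prop) (u : vec n) : vec n -> Prop :=
  fun y => exists x, S x /\ veq y (proj_perp u x).

Definition contains_translate n (A B : vec n -> Prop) : Prop :=
  exists w : vec n, forall y, B y -> A (vadd y w).

Definition dilate n (c : R) (L : vec n -> Prop) : vec n -> Prop :=
  fun z => exists y, L y /\ veq z (vscale c y).

(* Let h_S(v) = max_{y in S} <y, v> be the support function and, for n = q+1,
   let c = n/(n-1).  If a vector a satisfies <a, v> <= c h_L(v) - h_K(v) for all
   v, then every y + a with y in K lies in cL, by separation from the compact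
   convex set L.  So the theorem asks for a linear minorant of the positively
   homogeneous function gap = c h_L - h_K.

   Such a minorant exists as soon as gap is balanced, i.e. has nonnegative total
   over every finite family of vectors with zero sum (a finite-dimensional
   Hahn-Banach argument, extending the minorant one coordinate at a time), and
   by a Caratheodory-type reduction it suffices to check families of at most
   n+1 vectors.  A zero-sum family of at most n vectors lies in a hyperplane
   u^perp, where the projection hypothesis gives h_K + <w, .> <= h_L; a family
   of exactly n+1 vectors is handled by averaging the hyperplane inequality over
   the n families obtained by merging its first member with another one, which
   is where the constant n/(n-1) comes from. *)

From mathcomp Require Import all_boot.
From mathcomp Require ssralg matrix mxalgebra Rstruct.
From Stdlib Require Import Reals Lra.
From Stdlib Require Import Classical ClassicalEpsilon FunctionalExtensionality.
Import Rstruct.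

Set Implicit Arguments.
Unset Strict Implicit.

Open Scope R_scope.

Lemma rsum_le m (F G : 'I_m -> R) :
  (forall i, F i <= G i) -> \big[Rplus/0]_(i < m) F i <= \big[Rplus/0]_(i < m) G i.
Proof. by move=> FG; apply: big_ind2 => [|*|i _]; [lra|exact: Rplus_le_compat|]. Qed.

Lemma rsum_ge0 m (F : 'I_m -> R) : (forall i, 0 <= F i) -> 0 <= \big[Rplus/0]_(i < m) F i.
Proof. by move=> F0; apply: big_ind => [|x y|i _]; [lra|lra|exact: F0]. Qed.

Lemma rsum_opp m (F : 'I_m -> R) :
  - (\big[Rplus/0]_(i < m) F i) = \big[Rplus/0]_(i < m) (- F i).
Proof. by apply: big_morph => [x y|]; ring. Qed.

Lemma rsum_const m (a : R) : \big[Rplus/0]_(i < m) a = INR m * a.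
Proof.
elim: m => [|m IH]; first by rewrite big_ord0 /=; ring.
by rewrite big_ord_recl IH S_INR; ring.
Qed.

Definition vzero N : vec N := fun _ => 0.
Arguments vzero : clear implicits.

Lemma vec_ext N (x y : vec N) : veq x y -> x = y.
Proof. by move=> xy; apply: functional_extensionality. Qed.

Definition vsum N m (f : 'I_m -> vec N) : vec N := fun i => \big[Rplus/0]_(k < m) f k i.

Lemma vsum0 N (f : 'I_0 -> vec N) : vsum f = vzero N.
Proof. by apply: vec_ext => i; rewrite /vsum big_ord0. Qed.

Lemma vsumD1 N m (j : 'I_m.+1) (f : 'I_m.+1 -> vec N) :
  vsum f = vadd (f j) (vsum (fun k => f (lift j k))).
Proof. by apply: vec_ext => i; rewrite /vsum /vadd (bigD1_ord j). Qed.

Lemma dot_comm N (x y : vec N) : dot x y = dot y x.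
Proof. by rewrite /dot; apply: eq_bigr => i _; ring. Qed.

Lemma dot_addl N (x y z : vec N) : dot (vadd x y) z = dot x z + dot y z.
Proof. by rewrite /dot -big_split; apply: eq_bigr => i _; rewrite /vadd /=; ring. Qed.

Lemma dot_scalel N c (x z : vec N) : dot (vscale c x) z = c * dot x z.
Proof. by rewrite /dot big_distrr; apply: eq_bigr => i _; rewrite /vscale /=; ring. Qed.

Lemma dot_subl N (x y z : vec N) : dot (vsub x y) z = dot x z - dot y z.
Proof.
have -> : vsub x y = vadd x (vscale (-1) y).
  by apply: vec_ext => i; rewrite /vsub /vadd /vscale; ring.
by rewrite dot_addl dot_scalel; ring.
Qed.

Lemma dot_addr N (x y z : vec N) : dot z (vadd x y) = dot z x + dot z y.
Proof. by rewrite dot_comm dot_addl !(dot_comm z). Qed.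

Lemma dot_scaler N c (x z : vec N) : dot z (vscale c x) = c * dot z x.
Proof. by rewrite dot_comm dot_scalel (dot_comm z). Qed.

Lemma dot_subr N (x y z : vec N) : dot z (vsub x y) = dot z x - dot z y.
Proof. by rewrite dot_comm dot_subl !(dot_comm z). Qed.

Lemma dot0l N (z : vec N) : dot (vzero N) z = 0.
Proof. by rewrite /dot big1 // => i _; rewrite /vzero; ring. Qed.

Lemma dot_vsum N m (f : 'I_m -> vec N) (z : vec N) :
  dot (vsum f) z = \big[Rplus/0]_(k < m) dot (f k) z.
Proof.
rewrite /dot /vsum exchange_big /=; apply: eq_bigr => i _.
by rewrite Rmult_comm big_distrr; apply: eq_bigr => k _ /=; ring.
Qed.

Lemma dot_self_ge0 N (x : vec N) : 0 <= dot x x.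
Proof. by apply: rsum_ge0 => i; nra. Qed.

Lemma coord_sq_le N (x : vec N) i : x i * x i <= dot x x.
Proof.
rewrite /dot (bigD1_ord i) //=.
rewrite -{1}(Rplus_0_r (x i * x i)); apply: Rplus_le_compat_l; apply: rsum_ge0 => k; nra.
Qed.

Lemma dot_self_eq0 N (x : vec N) : dot x x = 0 -> forall i, x i = 0.
Proof. by move=> x0 i; have := coord_sq_le x i; have := dot_self_ge0 x; nra. Qed.

Definition basis N (k : 'I_N) : vec N := fun i => if i == k then 1 else 0.

Lemma dot_basis N (k : 'I_N) (v : vec N) : dot (basis k) v = v k.
Proof.
rewrite /dot (bigD1 k) //= big1 /basis ?eqxx; first ring.
by move=> i /negbTE ->; ring.
Qed.

(* The matrix library is imported locally, so that its ring notations do not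
   shadow those of the real numbers elsewhere. *)
Section LinearAlgebra.
Import ssralg matrix mxalgebra.

(* Rank-nullity: a homogeneous linear system of r equations in s > r unknowns
   has a nonzero solution. *)
Lemma homogeneous_nontrivial r s (A : 'I_r -> 'I_s -> R) : (r < s)%nat ->
  exists x : 'I_s -> R, (exists j, x j <> 0) /\
    forall i, \big[Rplus/0]_(j < s) (A i j * x j) = 0.
Proof.
Local Open Scope ring_scope.
(* x solves the system iff the row vector x lies in the left kernel of A^T *)
move=> lt_rs; pose M : 'M[R]_(s, r) := \matrix_(j < s, i < r) A i j.
have : \rank (kermx M) != 0%N.
  by rewrite mxrank_ker subn_eq0 -ltnNge (leq_ltn_trans (rank_leq_col M)).
rewrite mxrank_eq0 => /eqP /matrixP kerM_neq0.
have [k [j kerM_kj]] : exists k j, kermx M k j <> 0%R.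
  apply: NNPP => kerM0; apply: kerM_neq0 => k j; rewrite [RHS]mxE.
  by apply: NNPP => kerM_kj; apply: kerM0; exists k, j.
have /sub_kermxP rowM0 : (row k (kermx M) <= kermx M)%MS by apply: row_sub.
exists (fun j => kermx M k j); split; first by exists j.
move=> i; have E := congr1 (fun v : 'M_(1, r) => v ord0 i) rowM0.
apply: eq_trans (eq_trans _ E) _; last by rewrite mxE.
by rewrite mxE; apply: eq_bigr => l _; rewrite !mxE; exact: Rmult_comm.
Qed.

End LinearAlgebra.

Lemma common_normal N m (f : 'I_m -> vec N) : (m < N)%nat ->
  exists x : vec N, (exists j, x j <> 0) /\ forall k, dot x (f k) = 0.
Proof.
move=> lt_mN; have [x [x_neq0 fx0]] := homogeneous_nontrivial (fun k j => f k j) lt_mN.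
by exists x; split=> // k; rewrite dot_comm; exact: fx0.
Qed.

Lemma zero_sum_normal N m (f : 'I_m.+1 -> vec N) : (m < N)%nat -> vsum f = vzero N ->
  exists x : vec N, (exists j, x j <> 0) /\ forall k, dot x (f k) = 0.
Proof.
move=> lt_mN f0; have [x [x_neq0 xf]] := common_normal (fun k => f (lift ord0 k)) lt_mN.
exists x; split=> // k; case: (unliftP ord0 k) => [k' ->|->]; first exact: xf.
have := dot_vsum f x; rewrite f0 dot0l (bigD1_ord ord0) //= big1 => [|k' _].
  by rewrite dot_comm; lra.
by rewrite dot_comm xf.
Qed.

Lemma linear_relation N m (f : 'I_m -> vec N) : (N < m)%nat ->
  exists x : 'I_m -> R, (exists j, x j <> 0) /\
    vsum (fun k => vscale (x k) (f k)) = vzero N.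
Proof.
move=> lt_Nm; have [x [x_neq0 fx0]] := homogeneous_nontrivial (fun i k => f k i) lt_Nm.
exists x; split=> //; apply: vec_ext => i; rewrite /vzero -(fx0 i).
by apply: eq_bigr => k _; rewrite /vscale Rmult_comm.
Qed.

Lemma cauchy_schwarz_sq N (a b : vec N) : dot a b * dot a b <= dot a a * dot b b.
Proof.
have [b0|b_pos] : dot b b = 0 \/ 0 < dot b b by have := dot_self_ge0 b; lra.
  have -> : dot a b = 0.
    by rewrite /dot big1 // => i _; rewrite (dot_self_eq0 b0 i); ring.
  by rewrite b0; lra.
pose t := dot a b / dot b b.
have := dot_self_ge0 (vsub a (vscale t b)).
rewrite !dot_subl !dot_subr !dot_scalel !dot_scaler (dot_comm b a).
have -> : dot a a - t * dot a b - (t * dot a b - t * (t * dot b b)) =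
          (dot a a * dot b b - dot a b * dot a b) / dot b b by rewrite /t; field; lra.
move=> H; have := Rmult_le_compat_r (dot b b) _ _ (Rlt_le _ _ b_pos) H.
by rewrite Rmult_0_l /Rdiv Rmult_assoc Rinv_l; lra.
Qed.

Lemma vnorm_ge0 N (a : vec N) : 0 <= vnorm a.
Proof. exact: sqrt_pos. Qed.

Lemma vnorm_sq N (a : vec N) : vnorm a * vnorm a = dot a a.
Proof. by rewrite /vnorm sqrt_sqrt //; apply: dot_self_ge0. Qed.

Lemma cauchy_schwarz N (a b : vec N) : Rabs (dot a b) <= vnorm a * vnorm b.
Proof.
apply: Rsqr_incr_0_var; last by apply: Rmult_le_pos; apply: vnorm_ge0.
rewrite -Rsqr_abs /Rsqr.
have -> : vnorm a * vnorm b * (vnorm a * vnorm b) =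
          (vnorm a * vnorm a) * (vnorm b * vnorm b) by ring.
rewrite !vnorm_sq; exact: cauchy_schwarz_sq.
Qed.

Definition continuous_fun N (g : vec N -> R) := forall x eps, 0 < eps ->
  exists d, 0 < d /\ forall y, vnorm (vsub y x) < d -> Rabs (g y - g x) < eps.

Lemma continuous_opp N (g : vec N -> R) : continuous_fun g -> continuous_fun (fun y => - g y).
Proof.
move=> g_cont x eps eps_pos; have [d [d_pos gd]] := g_cont x eps eps_pos.
exists d; split=> // y /gd; rewrite -Rabs_Ropp; congr (Rabs _ < _); ring.
Qed.

Lemma continuous_dot N (v : vec N) : continuous_fun (fun y => dot y v).
Proof.
move=> x eps eps_pos; have v_ge0 := vnorm_ge0 v.
exists (eps / (vnorm v + 1)); split; first by apply: Rdiv_lt_0_compat; lra.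
move=> y yx; rewrite -dot_subl; apply: Rle_lt_trans (cauchy_schwarz _ _) _.
have := vnorm_ge0 (vsub y x).
have : vnorm (vsub y x) * (vnorm v + 1) < eps.
  have := Rmult_lt_compat_r (vnorm v + 1) _ _ ltac:(lra) yx.
  by rewrite /Rdiv Rmult_assoc Rinv_l; lra.
nra.
Qed.

Lemma continuous_sqdist N (p : vec N) : continuous_fun (fun y => dot (vsub y p) (vsub y p)).
Proof.
move=> x eps eps_pos; set a := vsub x p; have a_ge0 := vnorm_ge0 a.
exists (Rmin 1 (eps / (1 + 2 * vnorm a))); split.
  by apply: Rmin_glb_lt; [lra|apply: Rdiv_lt_0_compat; lra].
move=> y yx; set d := vsub y x in yx *.
have -> : vsub y p = vadd d a by apply: vec_ext => i; rewrite /d /a /vadd /vsub; ring.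
rewrite dot_addl !(dot_addr d a) (dot_comm a d).
have d_ge0 := vnorm_ge0 d.
have d_lt1 : vnorm d < 1 by apply: Rlt_le_trans yx (Rmin_l _ _).
have d_small : vnorm d * (1 + 2 * vnorm a) < eps.
  have := Rmult_lt_compat_r (1 + 2 * vnorm a) _ _ ltac:(lra)
    (Rlt_le_trans _ _ _ yx (Rmin_r _ _)).
  by rewrite /Rdiv Rmult_assoc Rinv_l; lra.
have := cauchy_schwarz d a; have := vnorm_sq d => dd.
have -> : dot d d + dot d a + (dot d a + dot a a) - dot a a = dot d d + 2 * dot d a by ring.
move=> cs; apply: Rle_lt_trans (Rabs_triang _ _) _.
rewrite Rabs_right -?dd; last by nra.
rewrite Rabs_mult Rabs_right; [nra|lra].
Qed.

Lemma list_argmin (A : Type) (g : A -> R) (P : A -> Prop) (l : list A) :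
  (exists a, List.In a l /\ P a) ->
  exists z, List.In z l /\ P z /\ forall z', List.In z' l -> P z' -> g z <= g z'.
Proof.
elim: l => [|a l IH] [b [bl Pb]]; first by case: bl.
have [tail|no_tail] := classic (exists c, List.In c l /\ P c).
- have [z [zl [Pz zmin]]] := IH tail.
  have [[Pa az]|a_worse] := classic (P a /\ g a < g z).
  + exists a; split; [by left|split=> // z' [<-|z'l] Pz']; first lra.
    by have := zmin z' z'l Pz'; lra.
  + exists z; split; [by right|split=> // z' [<-|z'l] Pz']; last exact: zmin.
    by apply: Rnot_lt_le => az; apply: a_worse.
- case: bl => [ab|bl]; last by case: no_tail; exists b.
  subst b; exists a; split; [by left|split=> // z' [<-|z'l] Pz']; first lra.
  by case: no_tail; exists z'.
Qed.

Lemma compact_argmin N (S : vec N -> Prop) (g : vec N -> R) :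
  is_compact S -> (exists x, S x) -> continuous_fun g ->
  exists2 z, S z & forall y, S y -> g z <= g y.
Proof.
move=> S_comp [x0 Sx0] g_cont; apply: NNPP => no_min.
have beaten : forall y, S y -> exists z, S z /\ g z < g y.
  move=> y Sy; apply: NNPP => unbeaten; apply: no_min; exists y => // y' Sy'.
  by apply: Rnot_lt_le => lt; apply: unbeaten; exists y'.
have beaten_open : forall z, is_open (fun y => S z /\ g z < g y).
  move=> z x [Sz zx]; have [d [d_pos gd]] := g_cont x (g x - g z) ltac:(lra).
  by exists d; split=> // y /gd /Rabs_def2 near; split=> //; lra.
have [l cover] := S_comp _ _ beaten_open beaten.
have [i [il [Si _]]] := cover x0 Sx0.
have [z [zl [Sz zmin]]] := list_argmin g (ex_intro _ i (conj il Si)).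
have [j [jl [Sj gjz]]] := cover z Sz.
by have := zmin j jl Sj; lra.
Qed.

Definition nonempty_compact N (S : vec N -> Prop) := is_compact S /\ exists x, S x.

Definition support N (S : vec N -> Prop) (v : vec N) : R :=
  epsilon (inhabits 0) (fun r => exists y, S y /\ dot y v = r /\ forall z, S z -> dot z v <= r).

Section SupportFunction.
Variables (N : nat) (S : vec N -> Prop).
Hypothesis S_nc : nonempty_compact S.

Lemma support_spec v :
  exists y, S y /\ dot y v = support S v /\ forall z, S z -> dot z v <= support S v.
Proof.
have [y Sy ymax] := compact_argmin S_nc.1 S_nc.2 (continuous_opp (continuous_dot v)).
apply: (epsilon_spec (inhabits 0) (fun r => exists y, S y /\ dot y v = r /\ _)).
by exists (dot y v), y; split=> //; split=> // z Sz; have := ymax z Sz; lra.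
Qed.

Lemma support_ge v z : S z -> dot z v <= support S v.
Proof. by have [y [_ [_ ymax]]] := support_spec v; apply: ymax. Qed.

Lemma support_subadd a b : support S (vadd a b) <= support S a + support S b.
Proof.
have [y [Sy [<- _]]] := support_spec (vadd a b).
by rewrite dot_addr; have := support_ge a Sy; have := support_ge b Sy; lra.
Qed.

Lemma support_scale t v : 0 <= t -> support S (vscale t v) = t * support S v.
Proof.
move=> t_ge0; have [y [Sy [yv _]]] := support_spec v.
have [y' [Sy' [y'v _]]] := support_spec (vscale t v).
apply: Rle_antisym.
  by rewrite -y'v dot_scaler; apply: Rmult_le_compat_l => //; exact: support_ge.
by rewrite -yv -dot_scaler; exact: support_ge.
Qed.

Lemma support_zero : support S (vzero N) = 0.
Proof.
have -> : vzero N = vscale 0 (vzero N) by apply: vec_ext => i; rewrite /vscale /vzero; ring.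
by rewrite support_scale; [ring|lra].
Qed.

Lemma support_vsum m (f : 'I_m -> vec N) :
  support S (vsum f) <= \big[Rplus/0]_(k < m) support S (f k).
Proof.
elim: m f => [|m IH] f; first by rewrite vsum0 support_zero big_ord0; lra.
rewrite (vsumD1 ord0) (bigD1_ord ord0) //=.
by apply: Rle_trans (support_subadd _ _) _; apply: Rplus_le_compat_l; exact: IH.
Qed.

End SupportFunction.

Lemma nearest_point_obtuse N (S : vec N -> Prop) p q : is_convex S -> S q ->
  (forall y, S y -> dot (vsub q p) (vsub q p) <= dot (vsub y p) (vsub y p)) ->
  forall z, S z -> dot (vsub z q) (vsub p q) <= 0.
Proof.
move=> S_conv Sq qmin z Sz; apply: Rnot_lt_le => g_pos.
set e := vsub z q in g_pos; set d := vsub p q in g_pos.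
set g := dot e d in g_pos; have E_ge0 : 0 <= dot e e := dot_self_ge0 e.
(* the point q + t (z - q), with t small, would be nearer to p *)
pose t := g / (dot e e + g).
have t_pos : 0 < t by apply: Rdiv_lt_0_compat; lra.
have tEg : t * (dot e e + g) = g by rewrite /t; field; lra.
have tE_ge0 := Rmult_le_pos _ _ (Rlt_le _ _ t_pos) E_ge0.
have t_le1 : t <= 1 by nra.
have := qmin _ (S_conv z q t Sz Sq (conj (Rlt_le _ _ t_pos) t_le1)).
have -> : vsub (vadd (vscale t z) (vscale (1 - t) q)) p = vsub (vscale t e) d.
  by apply: vec_ext => i; rewrite /vsub /vadd /vscale /e /d /vsub; ring.
have -> : vsub q p = vscale (-1) d by apply: vec_ext => i; rewrite /vsub /vscale /d /vsub; ring.
clearbody e d; rewrite !dot_subl !dot_subr !dot_scalel !dot_scaler (dot_comm d e) -/g.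
nra.
Qed.

Lemma support_separation N (S : vec N -> Prop) p : nonempty_compact S -> is_convex S ->
  (forall v, dot p v <= support S v) -> S p.
Proof.
move=> S_nc S_conv p_sup.
have [q Sq qmin] := compact_argmin S_nc.1 S_nc.2 (continuous_sqdist p).
have obtuse := nearest_point_obtuse S_conv Sq qmin; set d := vsub p q in obtuse.
have [z [Sz [zd _]]] := support_spec S_nc d.
have := obtuse z Sz; rewrite dot_subl zd; have := p_sup d.
have -> : dot p d = dot d d + dot q d by rewrite /d dot_subl; ring.
move=> pd qd; have d0 : dot d d = 0 by have := dot_self_ge0 d; lra.
suff -> : p = q by [].
by apply: vec_ext => i; have := dot_self_eq0 d0 i; rewrite /d /vsub; lra.
Qed.

Lemma real_interpolation (A B : R -> Prop) : (exists a, A a) -> (exists b, B b) ->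
  (forall a b, A a -> B b -> a <= b) ->
  exists c, (forall a, A a -> a <= c) /\ (forall b, B b -> c <= b).
Proof.
move=> A_ne [b0 Bb0] AB.
have A_bound : bound A by exists b0 => a Aa; exact: AB.
have [c [c_ub c_least]] := @completeness A A_bound A_ne.
by exists c; split=> // b Bb; apply: c_least => a Aa; exact: AB.
Qed.

Lemma ord_argmin m (F : 'I_m.+1 -> R) : exists i, forall k, F i <= F k.
Proof.
elim: m F => [|m IH] F.
  by exists ord0 => k; rewrite (ord1 k); lra.
have [i imin] := IH (fun k => F (lift ord0 k)).
have [F0_le|F0_gt] := Rle_lt_dec (F ord0) (F (lift ord0 i)).
  exists ord0 => k; case: (unliftP ord0 k) => [k' ->|->]; last lra.
  by have := imin k'; lra.
by exists (lift ord0 i) => k; case: (unliftP ord0 k) => [k' ->|->]; [exact: imin|lra].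
Qed.

Lemma ord_argmax m (F : 'I_m.+1 -> R) : exists i, forall k, F k <= F i.
Proof. by have [i imin] := ord_argmin (fun k => - F k); exists i => k; have := imin k; lra. Qed.

Lemma vsum_scale N m t (f : 'I_m -> vec N) :
  vsum (fun k => vscale t (f k)) = vscale t (vsum f).
Proof. by apply: vec_ext => i; rewrite /vsum /vscale big_distrr. Qed.

Definition fcat T m1 m2 (f1 : 'I_m1 -> T) (f2 : 'I_m2 -> T) : 'I_(m1 + m2) -> T :=
  fun k => match fintype.split k with inl i => f1 i | inr j => f2 j end.

Lemma rsum_fcat T m1 m2 (F : T -> R) (f1 : 'I_m1 -> T) (f2 : 'I_m2 -> T) :
  \big[Rplus/0]_(k < m1 + m2) F (fcat f1 f2 k) =
  \big[Rplus/0]_(k < m1) F (f1 k) + \big[Rplus/0]_(k < m2) F (f2 k).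
Proof.
rewrite big_split_ord /=; congr (_ + _); apply: eq_bigr => k _.
  by rewrite /fcat (unsplitK (inl _ k)).
by rewrite /fcat (unsplitK (inr _ k)).
Qed.

Lemma vsum_fcat N m1 m2 (f1 : 'I_m1 -> vec N) (f2 : 'I_m2 -> vec N) :
  vsum (fcat f1 f2) = vadd (vsum f1) (vsum f2).
Proof. by apply: vec_ext => i; rewrite /vsum /vadd (rsum_fcat (fun v : vec N => v i)). Qed.

(* A zero-sum family of more than N+1 vectors of R^N is a combination of two
   zero-sum families (beta_k f_k) and ((1 - beta_k) f_k), 0 <= beta <= 1, each of
   which contains a zero vector. *)
Lemma zero_sum_split N m (f : 'I_m.+1 -> vec N) : (N < m)%nat -> vsum f = vzero N ->
  exists (beta : 'I_m.+1 -> R) i0 i1, (forall k, 0 <= beta k <= 1) /\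
    beta i0 = 0 /\ beta i1 = 1 /\ vsum (fun k => vscale (beta k) (f k)) = vzero N.
Proof.
move=> lt_Nm f0.
have [x [[j xj] x_rel]] := linear_relation (fun k => f (lift ord0 k)) lt_Nm.
pose lam k := if unlift ord0 k is Some k' then x k' else 0.
have lam0 : lam ord0 = 0 by rewrite /lam unlift_none.
have lam_lift k : lam (lift ord0 k) = x k by rewrite /lam liftK.
have lam_rel : vsum (fun k => vscale (lam k) (f k)) = vzero N.
  rewrite (vsumD1 ord0) -x_rel; apply: vec_ext => i.
  rewrite /vadd /vscale /vsum lam0 Rmult_0_l Rplus_0_l.
  by apply: eq_bigr => k _; rewrite lam_lift.
(* normalize lam affinely so that its range becomes [0, 1] *)
have [i0 i0min] := ord_argmin lam; have [i1 i1max] := ord_argmax lam.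
set D := lam i1 - lam i0.
have D_pos : 0 < D.
  have := i0min ord0; have := i1max ord0; have := i0min (lift ord0 j).
  have := i1max (lift ord0 j); rewrite lam0 lam_lift /D.
  by case: (Rdichotomy _ _ xj) => *; lra.
pose beta k := (lam k - lam i0) / D.
have betaD k : beta k * D = lam k - lam i0 by rewrite /beta; field; lra.
exists beta, i0, i1; split; [|split; [|split]].
- move=> k; have D_def : D = lam i1 - lam i0 by [].
  by have := betaD k; have := i0min k; have := i1max k => le1 ge0 bD; split; nra.
- by rewrite /beta; field; lra.
- by rewrite /beta -/D; field; lra.
apply: vec_ext => i; have := congr1 (fun v => v i) lam_rel.
have := congr1 (fun v => v i) f0; rewrite /vsum /vscale /vzero /beta => fi lami.
rewrite (eq_bigr (fun k => / D * (lam k * f k i) + - (lam i0 / D) * f k i)); last first.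
  by move=> k _; rewrite /Rdiv; ring.
by rewrite big_split -!big_distrr /= fi lami; ring.
Qed.

Section PositivelyHomogeneous.
Variables (N : nat) (phi : vec N -> R).
Hypothesis phi_homog : forall t v, 0 <= t -> phi (vscale t v) = t * phi v.

Definition balanced := forall m (f : 'I_m -> vec N),
  vsum f = vzero N -> 0 <= \big[Rplus/0]_(k < m) phi (f k).

Lemma phi_zero : phi (vzero N) = 0.
Proof.
have -> : vzero N = vscale 0 (vzero N) by apply: vec_ext => i; rewrite /vscale /vzero; ring.
by rewrite phi_homog; [ring|lra].
Qed.

Lemma rsum_phi_scale m t (f : 'I_m -> vec N) : 0 <= t ->
  \big[Rplus/0]_(k < m) phi (vscale t (f k)) = t * \big[Rplus/0]_(k < m) phi (f k).
Proof. by move=> t_ge0; rewrite big_distrr; apply: eq_bigr => k _; rewrite phi_homog. Qed.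

Definition supported k (y : vec N) := forall i : 'I_N, (k <= i)%nat -> y i = 0.

Definition minorant_upto k (a : vec N) := supported k a /\
  forall y m (f : 'I_m -> vec N), supported k y -> vsum f = y ->
    dot a y <= \big[Rplus/0]_(j < m) phi (f j).

Section Extension.
Variables (k : nat) (a : vec N) (e : vec N).
Hypothesis a_min : minorant_upto k a.

(* Families summing to z - e and to y + e, with z and y supported on the first k
   coordinates: these give lower and upper bounds for the new coefficient. *)
Definition lower_bound r := exists z m (f : 'I_m -> vec N),
  supported k z /\ vsum f = vsub z e /\ r = dot a z - \big[Rplus/0]_(j < m) phi (f j).
Definition upper_bound r := exists y m (f : 'I_m -> vec N),
  supported k y /\ vsum f = vadd y e /\ r = \big[Rplus/0]_(j < m) phi (f j) - dot a y.

Lemma lower_le_upper r s : lower_bound r -> upper_bound s -> r <= s.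
Proof.
move=> [z [m1 [f1 [zk [f1z ->]]]]] [y [m2 [f2 [yk [f2y ->]]]]].
have zyk : supported k (vadd z y) by move=> i ki; rewrite /vadd zk // yk //; ring.
have f12 : vsum (fcat f1 f2) = vadd z y.
  by rewrite vsum_fcat f1z f2y; apply: vec_ext => i; rewrite /vadd /vsub; ring.
by have := a_min.2 _ _ _ zyk f12; rewrite rsum_fcat dot_addr; lra.
Qed.

Lemma bounds_exist : (exists r, lower_bound r) /\ (exists s, upper_bound s).
Proof.
have single : forall y : vec N, vsum (fun _ : 'I_1 => y) = y.
  by move=> y; apply: vec_ext => i; rewrite /vsum big_ord1.
have zero_k : supported k (vzero N) by [].
split.
  exists (dot a (vzero N) - phi (vsub (vzero N) e)), (vzero N), 1%nat, (fun _ => vsub (vzero N) e).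
  by rewrite single big_ord1.
exists (phi e - dot a (vzero N)), (vzero N), 1%nat, (fun _ => e); rewrite single big_ord1.
by split=> //; split=> //; apply: vec_ext => i; rewrite /vadd /vzero; ring.
Qed.

Lemma coefficient_bound al : (forall r, lower_bound r -> r <= al) ->
  (forall s, upper_bound s -> al <= s) ->
  forall y0 t m (f : 'I_m -> vec N), supported k y0 -> vsum f = vadd y0 (vscale t e) ->
    dot a y0 + t * al <= \big[Rplus/0]_(j < m) phi (f j).
Proof.
move=> al_low al_up y0 t m f y0k fy.
have scaled s : 0 < s -> supported k (vscale s y0) /\
    vsum (fun j => vscale s (f j)) = vadd (vscale s y0) (vscale (s * t) e).
  move=> s_pos; split; first by move=> i ki; rewrite /vscale y0k //; ring.
  by rewrite vsum_scale fy; apply: vec_ext => i; rewrite /vscale /vadd; ring.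
have [t_neg|[t0|t_pos]] := Rtotal_order t 0.
- (* rescaled by 1/(-t), the family gives a lower bound for al *)
  set s := / - t; have s_pos : 0 < s by apply: Rinv_0_lt_compat; lra.
  have [sy0k sf] := scaled s s_pos.
  have sf' : vsum (fun j => vscale s (f j)) = vsub (vscale s y0) e.
    by rewrite sf; apply: vec_ext => i; rewrite /vscale /vadd /vsub /s; field; lra.
  have := al_low _ (ex_intro _ _ (ex_intro _ _ (ex_intro _ _ (conj sy0k (conj sf' erefl))))).
  rewrite rsum_phi_scale ?dot_scaler; last lra.
  move=> /(Rmult_le_compat_l (- t) _ _ ltac:(lra)).
  have -> : - t * (s * dot a y0 - s * \big[Rplus/0]_(j < m) phi (f j)) =
            dot a y0 - \big[Rplus/0]_(j < m) phi (f j) by rewrite /s; field; lra.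
  lra.
- have y0f : vsum f = y0 by rewrite fy t0; apply: vec_ext => i; rewrite /vadd /vscale; ring.
  by have := a_min.2 _ _ _ y0k y0f; rewrite t0; lra.
- (* rescaled by 1/t, the family gives an upper bound for al *)
  set s := / t; have s_pos : 0 < s by apply: Rinv_0_lt_compat.
  have [sy0k sf] := scaled s s_pos.
  have sf' : vsum (fun j => vscale s (f j)) = vadd (vscale s y0) e.
    by rewrite sf; apply: vec_ext => i; rewrite /vscale /vadd /s; field; lra.
  have := al_up _ (ex_intro _ _ (ex_intro _ _ (ex_intro _ _ (conj sy0k (conj sf' erefl))))).
  rewrite rsum_phi_scale ?dot_scaler; last lra.
  move=> /(Rmult_le_compat_l t _ _ ltac:(lra)).
  have -> : t * (s * \big[Rplus/0]_(j < m) phi (f j) - s * dot a y0) =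
            \big[Rplus/0]_(j < m) phi (f j) - dot a y0 by rewrite /s; field; lra.
  lra.
Qed.

End Extension.

(* One-coordinate extension step, in the manner of Hahn-Banach: choosing the new
   coefficient between all lower and upper bounds keeps the minorant property. *)
Lemma minorant_extend k a : (k < N)%nat -> minorant_upto k a ->
  exists a', minorant_upto k.+1 a'.
Proof.
move=> lt_kN a_min; pose kk := Ordinal lt_kN; pose e := basis kk.
have [low_ne up_ne] := bounds_exist k a e.
have [al [al_low al_up]] := real_interpolation low_ne up_ne (lower_le_upper a_min).
have a_kk : a kk = 0 by apply: a_min.1; rewrite leqnn.
have higher (i : 'I_N) : (k.+1 <= i)%nat -> i != kk.
  by move=> ki; apply/eqP => ikk; move: ki; rewrite ikk ltnn.
exists (vadd a (vscale al e)); split.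
  move=> i ki; rewrite /vadd /vscale /e /basis (negbTE (higher i ki)) a_min.1; [ring|].
  exact: ltnW.
move=> y m f yk fy; set t := y kk; set y0 := vsub y (vscale t e).
have y0k : supported k y0.
  move=> i ki; rewrite /y0 /vsub /vscale /e /basis.
  case: eqP => [->|ikk]; first by rewrite /t; ring.
  rewrite yk; first ring.
  by rewrite ltn_neqAle ki andbT; apply/eqP => ik; apply: ikk; apply: val_inj.
have y_dec : y = vadd y0 (vscale t e).
  by apply: vec_ext => i; rewrite /y0 /vadd /vsub; ring.
have -> : dot (vadd a (vscale al e)) y = dot a y0 + t * al.
  have y0_kk : y0 kk = 0 by apply: y0k; rewrite leqnn.
  clearbody y0; rewrite y_dec dot_addl !dot_addr !dot_scalel !dot_scaler.
  by rewrite (dot_comm a e) !dot_basis a_kk y0_kk /e /basis eqxx; ring.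
by apply: (coefficient_bound a_min al_low al_up y0k); rewrite fy.
Qed.

Lemma linear_minorant : balanced -> exists a : vec N, forall v, dot a v <= phi v.
Proof.
move=> phi_bal.
have minorant0 : minorant_upto 0 (vzero N).
  split=> // y m f y0 fy; have y_eq0 : y = vzero N by apply: vec_ext => i; apply: y0.
  by rewrite y_eq0 dot0l; apply: phi_bal; rewrite fy.
have minorant_all k : (k <= N)%nat -> exists a, minorant_upto k a.
  elim: k => [|k IH] le_kN; first by exists (vzero N).
  by have [a a_min] := IH (ltnW le_kN); exact: minorant_extend le_kN a_min.
have [a [_ a_min]] := minorant_all N (leqnn N).
exists a => v; have v_sup : supported N v by move=> i; rewrite leqNgt ltn_ord.
have := a_min v 1%nat (fun _ => v) v_sup; rewrite big_ord1; apply.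
by apply: vec_ext => i; rewrite /vsum big_ord1.
Qed.

Lemma drop_zero_member m (f : 'I_m.+1 -> vec N) i : f i = vzero N ->
  \big[Rplus/0]_(k < m.+1) phi (f k) = \big[Rplus/0]_(k < m) phi (f (lift i k)) /\
  vsum (fun k => f (lift i k)) = vsum f.
Proof.
move=> fi0; split; first by rewrite (bigD1_ord i) //= fi0 phi_zero Rplus_0_l.
by rewrite (vsumD1 i) fi0; apply: vec_ext => j; rewrite /vadd /vzero; ring.
Qed.

Lemma balanced_of_small :
  (forall m (f : 'I_m -> vec N), (m <= N.+1)%nat -> vsum f = vzero N ->
     0 <= \big[Rplus/0]_(k < m) phi (f k)) -> balanced.
Proof.
move=> small.
suff bounded M m (f : 'I_m -> vec N) : (m <= M)%nat -> vsum f = vzero N ->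
    0 <= \big[Rplus/0]_(k < m) phi (f k) by move=> m f; apply: (bounded m).
elim: M m f => [|M IH] m f le_mM f0; first by apply: small => //; apply: leq_trans le_mM _.
case: (leqP m N.+1) => [m_small|m_large]; first exact: small.
case: m f le_mM f0 m_large => [//|m] f le_mM f0 lt_Nm.
have [beta [i0 [i1 [beta01 [beta0 [beta1 beta_f]]]]]] := zero_sum_split (N := N) lt_Nm f0.
pose g1 k := vscale (1 - beta k) (f k); pose g2 k := vscale (beta k) (f k).
have g1_0 : vsum g1 = vzero N.
  apply: vec_ext => i; have := congr1 (fun v => v i) beta_f; have := congr1 (fun v => v i) f0.
  rewrite /g1 /vsum /vscale /vzero => fi bfi.
  rewrite (eq_bigr (fun k => f k i + - (beta k * f k i))); last by move=> k _; ring.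
  by rewrite big_split -rsum_opp /= fi bfi; ring.
have total_split : \big[Rplus/0]_(k < m.+1) phi (f k) =
    \big[Rplus/0]_(k < m.+1) phi (g1 k) + \big[Rplus/0]_(k < m.+1) phi (g2 k).
  rewrite -big_split; apply: eq_bigr => k _ /=.
  by case: (beta01 k) => b0 b1; rewrite /g1 /g2 !phi_homog; try ring; lra.
have g1_i1 : g1 i1 = vzero N by apply: vec_ext => i; rewrite /g1 /vscale beta1 /vzero; ring.
have g2_i0 : g2 i0 = vzero N by apply: vec_ext => i; rewrite /g2 /vscale beta0 /vzero; ring.
have [tot1 sum1] := drop_zero_member g1_i1; have [tot2 sum2] := drop_zero_member g2_i0.
rewrite total_split tot1 tot2; apply: Rplus_le_le_0_compat; apply: IH => //.
- by rewrite sum1.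
- by rewrite sum2.
Qed.

End PositivelyHomogeneous.

Lemma proj_perp_dot N (u x v : vec N) :
  dot (proj_perp u x) v = dot x v - dot x u * dot u v.
Proof. by rewrite /proj_perp dot_subl dot_scalel. Qed.

(* Basis vectors are unit vectors (so at least one projection is available). *)
Lemma basis_unit N (k : 'I_N) : unit_vector (basis k).
Proof. by rewrite /unit_vector /vnorm dot_basis /basis eqxx sqrt_1. Qed.

Lemma translate_into_dilate N (K L : vec N -> Prop) c a :
  nonempty_compact K -> nonempty_compact L -> is_convex L -> 0 < c ->
  (forall v, dot a v <= c * support L v - support K v) ->
  forall y, K y -> dilate c L (vadd y a).
Proof.
move=> K_nc L_nc L_conv c_pos a_min y Ky.
exists (vscale (/ c) (vadd y a)); split; last by move=> i; rewrite /vscale; field; lra.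
apply: support_separation => // v; rewrite dot_scalel dot_addl.
have := a_min v; have := support_ge K_nc v Ky => yv av.
apply: (Rmult_le_reg_l c) => //; rewrite -Rmult_assoc Rinv_r; lra.
Qed.

Section Projections.
Variables (q : nat) (K L : vec q.+1 -> Prop).
Hypotheses (K_nc : nonempty_compact K) (L_nc : nonempty_compact L).
Hypothesis proj_translate : forall u, unit_vector u ->
  contains_translate (proj_set L u) (proj_set K u).

Lemma hyperplane_translate u : (exists j, u j <> 0) ->
  exists w, forall v, dot u v = 0 -> support K v + dot w v <= support L v.
Proof.
move=> [j uj].
have uu_pos : 0 < dot u u.
  by have := coord_sq_le u j; have := Rsqr_pos_lt _ uj; rewrite /Rsqr; lra.
have [nu [nu_pos nu_sq]] : exists nu, 0 < nu /\ nu * nu = dot u u.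
  by exists (vnorm u); have := vnorm_ge0 u; have := vnorm_sq u; split=> //; nra.
have u1_unit : unit_vector (vscale (/ nu) u).
  rewrite /unit_vector /vnorm dot_scalel dot_scaler -nu_sq.
  have -> : / nu * (/ nu * (nu * nu)) = 1 by field; lra.
  exact: sqrt_1.
have [w w_transl] := proj_translate u1_unit.
exists w => v uv; have [y [Ky [yv _]]] := support_spec K_nc v.
have [z [Lz /vec_ext z_eq]] := w_transl _ (ex_intro _ y (conj Ky (fun i => erefl))).
have := congr1 (fun x : vec q.+1 => dot x v) z_eq.
rewrite dot_addl !proj_perp_dot dot_scalel uv yv.
by have := support_ge L_nc v Lz; lra.
Qed.

(* A zero-sum family of at most q+1 vectors lies in a hyperplane, so its total
   K-support is dominated by its total L-support. *)
Lemma hyperplane_support_total m (f : 'I_m.+1 -> vec q.+1) : (m <= q)%nat ->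
  vsum f = vzero q.+1 ->
  \big[Rplus/0]_(k < m.+1) support K (f k) <= \big[Rplus/0]_(k < m.+1) support L (f k).
Proof.
move=> le_mq f0; have [x [x_neq0 xf]] := zero_sum_normal (N := q.+1) le_mq f0.
have [w w_transl] := hyperplane_translate x_neq0.
have wf : \big[Rplus/0]_(k < m.+1) dot w (f k) = 0.
  by rewrite -(eq_bigr _ (fun k _ => dot_comm (f k) w)) -dot_vsum f0 dot0l.
have := rsum_le (F := fun k => support K (f k) + dot w (f k)) (fun k => w_transl _ (xf k)).
by rewrite big_split /= wf; lra.
Qed.

Variable c : R.
Hypothesis c_def : c * INR q = INR q + 1.

Lemma c_gt1 : 1 < c.
Proof. by have := pos_INR q; nra. Qed.

Lemma q_pos : 0 < INR q.
Proof. by have := c_gt1; nra. Qed.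

Definition gap v := c * support L v - support K v.

Lemma gap_homog t v : 0 <= t -> gap (vscale t v) = t * gap v.
Proof. by move=> t_ge0; rewrite /gap !support_scale //; ring. Qed.

Lemma rsum_gap m (f : 'I_m -> vec q.+1) : \big[Rplus/0]_(k < m) gap (f k) =
  c * \big[Rplus/0]_(k < m) support L (f k) - \big[Rplus/0]_(k < m) support K (f k).
Proof. by rewrite /gap /Rminus big_split /= -big_distrr -rsum_opp. Qed.

Lemma gap_balanced_short m (f : 'I_m.+1 -> vec q.+1) : (m <= q)%nat ->
  vsum f = vzero q.+1 -> 0 <= \big[Rplus/0]_(k < m.+1) gap (f k).
Proof.
move=> le_mq f0; have := hyperplane_support_total le_mq f0.
have := support_vsum L_nc f; rewrite f0 (support_zero L_nc) rsum_gap.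
by have := c_gt1; nra.
Qed.

(* Merging f_0 with f_(j+1) leaves a zero-sum family of q+1 vectors. *)
Lemma merged_support_total (f : 'I_q.+2 -> vec q.+1) (j : 'I_q.+1) :
  vsum f = vzero q.+1 ->
  \big[Rplus/0]_(k < q.+1) support K (f (lift ord0 k)) - support K (f (lift ord0 j)) +
    support K (vadd (f ord0) (f (lift ord0 j))) <= \big[Rplus/0]_(k < q.+2) support L (f k).
Proof.
move=> f0; set a := f ord0; set b := fun k => f (lift ord0 k).
pose g := fcat (fun _ : 'I_1 => vadd a (b j)) (fun k : 'I_q => b (lift j k)).
have g0 : vsum g = vzero q.+1.
  rewrite vsum_fcat -f0; apply: vec_ext => i.
  rewrite /vsum /vadd big_ord1 [in RHS]big_ord_recl [in RHS](bigD1_ord j) //= /a /b; ring.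
have sum_g (S : vec q.+1 -> Prop) : \big[Rplus/0]_(k < q.+1) support S (g k) =
    \big[Rplus/0]_(k < 1) support S (vadd a (b j)) +
    \big[Rplus/0]_(k < q) support S (b (lift j k)) :=
  rsum_fcat (support S) (fun _ : 'I_1 => vadd a (b j)) (fun k : 'I_q => b (lift j k)).
have := hyperplane_support_total (f := g) (leqnn q) g0.
rewrite !sum_g !big_ord1 (bigD1_ord j) //= big_ord_recl (bigD1_ord j) //=.
by have := support_subadd L_nc a (b j); rewrite /a /b; lra.
Qed.

(* Balance for families of exactly q+2 vectors: averaging the q+1 merged
   inequalities yields q h_K-total <= (q+1) h_L-total. *)
Lemma gap_balanced_full (f : 'I_q.+2 -> vec q.+1) :
  vsum f = vzero q.+1 -> 0 <= \big[Rplus/0]_(k < q.+2) gap (f k).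
Proof.
move=> f0; set a := f ord0; set b := fun k : 'I_q.+1 => f (lift ord0 k).
set SK := \big[Rplus/0]_(j < q.+1) support K (b j).
set AL := \big[Rplus/0]_(k < q.+2) support L (f k).
have merged j : SK - support K (b j) + support K (vadd a (b j)) <= AL.
  exact: merged_support_total j f0.
have averaged : INR q.+1 * SK + - SK +
    \big[Rplus/0]_(j < q.+1) support K (vadd a (b j)) <= INR q.+1 * AL.
  by have := rsum_le merged; rewrite !big_split /= -rsum_opp !rsum_const -/SK.
have ab : vsum (fun j => vadd a (b j)) = vscale (INR q) a.
  apply: vec_ext => i; have := congr1 (fun v => v i) f0.
  rewrite /vsum /vadd /vscale /vzero big_ord_recl big_split /= rsum_const S_INR -/a.
  by rewrite /b; lra.
have := support_vsum K_nc (fun j => vadd a (b j)).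
rewrite ab (support_scale K_nc _ (pos_INR q)) => lower.
rewrite rsum_gap -/AL big_ord_recl -/a -/SK.
apply: (Rmult_le_reg_l (INR q)); first exact: q_pos.
rewrite S_INR in averaged.
have := congr1 (Rmult^~ AL) c_def; nra.
Qed.

Lemma gap_balanced : balanced gap.
Proof.
apply: balanced_of_small; first exact: gap_homog.
move=> [|m] f le_m f0; first by rewrite big_ord0; lra.
have [le_mq|lt_qm] := leqP m q; first exact: gap_balanced_short le_mq f0.
have m_eq : m = q.+1 by apply/eqP; rewrite eqn_leq lt_qm andbT.
by move: f f0; rewrite m_eq => f f0; exact: gap_balanced_full.
Qed.

End Projections.

Theorem mainTheorem8 (n : nat) (K L : vec n -> Prop) :
  (2 <= n)%nat ->
  is_compact K -> is_convex K ->
  is_compact L -> is_convex L ->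
  (forall u : vec n, unit_vector u ->
     contains_translate (proj_set L u) (proj_set K u)) ->
  exists x : vec n,
    forall y, K y -> dilate (INR n / (INR n - 1))%R L (vadd y x).
Proof.
move=> n_ge2 K_comp _ L_comp L_conv proj_transl.
have [[y0 Ky0]|K_empty] := classic (exists y, K y); last first.
  by exists (vzero n) => y Ky; case: K_empty; exists y.
case: n n_ge2 K L K_comp L_comp L_conv proj_transl y0 Ky0 => [//|q] q_ge1 K L.
move=> K_comp L_comp L_conv proj_transl y0 Ky0.
have K_nc : nonempty_compact K by split=> //; exists y0.
have L_nc : nonempty_compact L.
  have [w Kw] := proj_transl _ (basis_unit ord0).
  by have [z [Lz _]] := Kw _ (ex_intro _ y0 (conj Ky0 (fun i => erefl))); split=> //; exists z.
set c := INR q.+1 / (INR q.+1 - 1).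
have q_pos : 0 < INR q by apply: lt_0_INR; apply/ltP.
have c_def : c * INR q = INR q + 1 by rewrite /c S_INR; field; lra.
have [a a_min] :=
  linear_minorant (gap_homog K_nc L_nc c) (gap_balanced K_nc L_nc proj_transl c_def).
exists a => y Ky; apply: (translate_into_dilate K_nc L_nc L_conv _ a_min Ky).
by have := c_gt1 c_def; lra.
Qed.
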